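(* Let $n\ge 1$ and $m\ge 2$ be integers, and let $\chi_{n,m}\colon\mathbb{F}_2^n\to\mathbb{F}_2^n$ be given by $\chi_{n,m}(x)=y$ with $y_i=x_i+x_{i+m}(x_{i+m-1}+1)(x_{i+m-2}+1)\cdots(x_{i+1}+1)$ for $i\in\{0,\dots,n-1\}$, indices modulo $n$. Then $\chi_{n,m}$ is a permutation of $\mathbb{F}_2^n$ if and only if $m\nmid n$. In particular, if $m\nmid n$ and $\ell=\lfloor n/m\rfloor$, then $$\chi_{n,m}^{-1}=\theta_{m,0}+\theta_{m,1}+\theta_{m,2}+\cdots+\theta_{m,\ell},$$ equivalently, $\chi_{n,m}^{-1}(x)=y$ with $y_i=x_i+\sum_{k=1}^{\ell}x_{i+mk}\prod_{1\le j\le mk-1,\ m\nmid j}(x_{i+j}+1)$; moreover the algebraic degree of $\chi_{n,m}^{-1}$ is $(m-1)\ell+1$.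
   Context: For a nonnegative integer $k$, $\theta_{m,k}\colon\mathbb{F}_2^n\to\mathbb{F}_2^n$ is defined by $\theta_{m,k}(x)=y$ with $y_i=x_{i+mk}\prod_{1\le j\le mk-1,\ m\nmid j}(x_{i+j}+1)$ (indices modulo $n$); $\theta_{m,0}$ is the identity map. Sums of maps are pointwise sums. The algebraic degree of a map $\mathbb{F}_2^n\to\mathbb{F}_2^n$ is the maximum degree of the algebraic normal forms of its coordinate functions. *)

(* F_2 is modelled by bool: addition = xor (addb),
   multiplication = andb, and (x + 1) = ~~ x. *)
From mathcomp Require Import all_boot.
Set Implicit Arguments. Unset Strict Implicit. Unset Printing Implicit Defensive.

Definition vec (n : nat) := {ffun 'I_n -> bool}.

(* x_k with the index k taken modulo n (n >= 1 in all uses). *)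
Definition at_ (n : nat) (x : vec n) (k : nat) : bool :=
  odflt false (omap x (insub (k %% n) : option 'I_n)).

Definition chi (n m : nat) (x : vec n) : vec n :=
  [ffun i : 'I_n => addb (at_ x i)
     (at_ x (i + m) && \big[andb/true]_(1 <= j < m) ~~ at_ x (i + j))].

Definition theta (n m k : nat) (x : vec n) : vec n :=
  if k == 0 then x else
  [ffun i : 'I_n => at_ x (i + m * k) &&
     \big[andb/true]_(1 <= j < m * k | ~~ (m %| j)) ~~ at_ x (i + j)].

Definition theta_sum (n m l : nat) (x : vec n) : vec n :=
  [ffun i : 'I_n => \big[addb/false]_(k < l.+1) theta m k x i].

Definition indic (n : nat) (T : {set 'I_n}) : vec n := [ffun i => i \in T].

(* Coefficient of the monomial prod_{i in S} x_i in the algebraic normal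
   form of f (binary Moebius transform). *)
Definition anf_coef (n : nat) (f : vec n -> bool) (S : {set 'I_n}) : bool :=
  \big[addb/false]_(T : {set 'I_n} | T \subset S) f (indic T).

(* Degree of the ANF of a Boolean function (0 for the zero function). *)
Definition anf_deg (n : nat) (f : vec n -> bool) : nat :=
  \max_(S : {set 'I_n} | anf_coef f S) #|S|.

Definition alg_deg (n : nat) (F : vec n -> vec n) : nat :=
  \max_(i : 'I_n) anf_deg (fun x => F x i).

(* Let [X] be the [n]-periodic sequence of a vector [x] and [Y] that of
   [chi x].  If [X (p + m)] holds, the [m - 1] entries of [Y] after [p] agree
   with those of [X], so [X p = Y p + X (p + m) * prod_(0 < j < m) (Y (p + j) + 1)];
   iterating [L] times gives [X p = sum_(k < L) theta_k(Y) p + E_L], where [E_L]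
   contains the factors [Y (p + j) + 1] for all [0 < j < m L] with [m] not
   dividing [j].  For [L = n] these offsets meet every residue mod [n], so
   [E_n <> 0] forces [Y = 0], and a nonzero [X] with [chi X = 0] is impossible
   when [m] does not divide [n]: its ones march in steps of [m] over zeros and
   come back onto a zero.  The terms [theta_k] with [k > n / m] vanish because
   they contain both [Y (p + m k)] and [Y (p + m k - n) + 1].  When [m] divides
   [n], the indicator of the multiples of [m] and [0] have the same image.
   For the degree, [theta_k] depends on only [(m - 1) k + 1] variables, and
   when [m k < n] its restriction to the subsets of these variables is the
   indicator of a single point, so the full monomial occurs. *)

From mathcomp Require Import all_boot zify.
Set Implicit Arguments. Unset Strict Implicit. Unset Printing Implicit Defensive.

Lemma big_nat_and_condP (a b : nat) (P : pred nat) (F : nat -> bool) :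
  reflect (forall j, a <= j < b -> P j -> F j)
          (\big[andb/true]_(a <= j < b | P j) F j).
Proof.
rewrite big_all_cond; apply: (iffP allP) => [H j ab_j Pj | H j].
  by move: (H j); rewrite mem_index_iota ab_j /= Pj => /(_ isT).
by rewrite mem_index_iota => ab_j; apply/implyP; apply: H.
Qed.

Lemma big_nat_andP (a b : nat) (F : nat -> bool) :
  reflect (forall j, a <= j < b -> F j) (\big[andb/true]_(a <= j < b) F j).
Proof.
apply: (iffP (big_nat_and_condP _ _ _ _)) => H j ab_j; first exact: H.
by move=> _; apply: H.
Qed.

Section Sequences.
Variable m : nat.

Definition zero_run (X : nat -> bool) (p : nat) : bool :=
  \big[andb/true]_(1 <= j < m) ~~ X (p + j).

Definition chi_seq (X : nat -> bool) (p : nat) : bool :=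
  X p (+) (X (p + m) && zero_run X p).

Definition zero_offgrid (Y : nat -> bool) (k p : nat) : bool :=
  \big[andb/true]_(1 <= j < m * k | ~~ (m %| j)) ~~ Y (p + j).

Definition theta_seq (Y : nat -> bool) (k p : nat) : bool :=
  Y (p + m * k) && zero_offgrid Y k p.

Definition theta_seq_sum (Y : nat -> bool) (L p : nat) : bool :=
  \big[addb/false]_(k < L) theta_seq Y k p.

Lemma zero_offgrid0 Y p : zero_offgrid Y 0 p.
Proof. by rewrite /zero_offgrid muln0 big_geq. Qed.

Lemma zero_offgridS Y k p : zero_offgrid Y k.+1 p = zero_run Y p && zero_offgrid Y k (p + m).
Proof.
apply/big_nat_and_condP/andP => [Y0 | [/big_nat_andP Y0_run Y0_next] j].
- split.
    apply/big_nat_andP => j j_lt; apply: Y0; first lia.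
    by apply/negP => /dvdn_leq; lia.
  apply/big_nat_and_condP => j j_lt m_ndvd_j; rewrite -addnA; apply: Y0; first lia.
  by rewrite dvdn_addr.
- rewrite mulnS => j_lt m_ndvd_j; have [j_ltm | j_gem] := ltnP j m.
    by apply: Y0_run; lia.
  have j_neq_m : j != m by apply: contraNneq m_ndvd_j => ->.
  move/big_nat_and_condP: Y0_next => /(_ (j - m)); rewrite -addnA subnKC //.
  apply; first lia.
  by rewrite -(dvdn_addr _ (dvdnn m)) subnKC.
Qed.

Lemma theta_seq0 Y p : theta_seq Y 0 p = Y p.
Proof. by rewrite /theta_seq zero_offgrid0 muln0 addn0 andbT. Qed.

Lemma theta_seqS Y k p : theta_seq Y k.+1 p = zero_run Y p && theta_seq Y k (p + m).
Proof. by rewrite /theta_seq zero_offgridS mulnS addnA andbCA. Qed.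

Lemma theta_seq_sumS Y L p :
  theta_seq_sum Y L.+1 p = Y p (+) (zero_run Y p && theta_seq_sum Y L (p + m)).
Proof.
rewrite /theta_seq_sum big_ord_recl theta_seq0 big_distrr /=.
by congr addb; apply: eq_bigr => k _; rewrite theta_seqS.
Qed.

Section Inversion.
Variables X Y : nat -> bool.
Hypothesis YE : Y =1 chi_seq X.

Lemma zero_run_chi_seq p : X (p + m) -> zero_run Y p = zero_run X p.
Proof.
move=> Xpm; apply: eq_big_nat => j /andP[j_ge1 j_ltm]; rewrite YE /chi_seq.
suff /negbTE -> : ~~ zero_run X (p + j) by rewrite andbF addbF.
apply/negP => /big_nat_andP zero_runX.
have /zero_runX : 1 <= m - j < m by lia.
by rewrite -addnA subnKC ?Xpm // ltnW.
Qed.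

Lemma chi_seq_step p : X p = Y p (+) (zero_run Y p && X (p + m)).
Proof.
case Xpm: (X (p + m)); last by rewrite YE /chi_seq Xpm andbF !addbF.
by rewrite zero_run_chi_seq // YE /chi_seq Xpm !andbT addbK.
Qed.

Lemma chi_seq_unfold L p :
  X p = theta_seq_sum Y L p (+) (zero_offgrid Y L p && X (p + m * L)).
Proof.
elim: L p => [|L IH] p; first by rewrite /theta_seq_sum big_ord0 zero_offgrid0 muln0 addn0.
rewrite {1}chi_seq_step {1}IH theta_seq_sumS zero_offgridS andb_addr addbA -andbA.
by rewrite mulnS addnA.
Qed.

End Inversion.
End Sequences.

Lemma chi_seq_dvdn m X : 0 < m -> X =1 dvdn m -> forall q, chi_seq m X q = false.
Proof.
move=> m_gt0 Xgrid q; rewrite /chi_seq !Xgrid.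
have [m_dvd_q | m_ndvd_q] := boolP (m %| q).
  rewrite dvdn_addr // dvdnn /=; apply/negbF/big_nat_andP => j j_lt.
  by rewrite Xgrid dvdn_addr //; apply/negP => /dvdn_leq; lia.
rewrite addFb; apply/negbTE/negP => /andP[_ /big_nat_andP zero_runX].
have q_mod_gt0 : 0 < q %% m by rewrite lt0n.
have /zero_runX : 1 <= m - q %% m < m by have := ltn_pmod q m_gt0; lia.
have -> : q + (m - q %% m) = (q %/ m).+1 * m.
  by have := ltn_pmod q m_gt0; rewrite mulSn {1}(divn_eq q m); lia.
by rewrite Xgrid dvdn_mull.
Qed.

Definition periodic (n : nat) (X : nat -> bool) : Prop :=
  forall a b, a = b %[mod n] -> X a = X b.

Section Periodic.
Variables n m : nat.
Hypotheses (n_gt0 : 0 < n) (m_gt1 : 1 < m) (m_ndvd_n : ~~ (m %| n)).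

Let m_gt0 : 0 < m := ltnW m_gt1.

Lemma theta_seq_eq0 Y k p : periodic n Y -> n %/ m < k -> theta_seq m Y k p = false.
Proof.
move=> Yper lt_k; have n_lt : n < m * k by rewrite mulnC -ltn_divLR.
rewrite /theta_seq; case Ylead: (Y (p + m * k)) => //=.
apply/negbTE/negP => /big_nat_and_condP Y0.
have range : 1 <= m * k - n < m * k by lia.
have := Y0 _ range; rewrite dvdn_subr ?(ltnW n_lt) ?dvdn_mulr // m_ndvd_n.
rewrite (Yper _ (p + m * k)) ?Ylead => [/(_ isT) //|].
by rewrite -[in RHS](subnK (ltnW n_lt)) addnA modnDr.
Qed.

Lemma theta_seq_sum_extend Y L p : periodic n Y -> (n %/ m).+1 <= L ->
  theta_seq_sum m Y L p = theta_seq_sum m Y (n %/ m).+1 p.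
Proof.
move=> Yper; elim: L => [//|L IH]; rewrite leq_eqVlt => /predU1P[-> //|lt_L].
by rewrite /theta_seq_sum big_ord_recr /= theta_seq_eq0 // addbF; apply: IH.
Qed.

Lemma chi_seq_eq0 X : periodic n X -> (forall q, chi_seq m X q = false) ->
  forall q, X q = false.
Proof.
move=> Xper X_in_ker q; apply/negP => Xq.
have step a : X a -> X (a + m) && zero_run m X a.
  by have := X_in_ker a; rewrite /chi_seq => /eqP; case: (X a); case: (_ && _).
have grid k : X (q + m * k).
  elim: k => [|k IH]; first by rewrite muln0 addn0.
  by have /andP[] := step _ IH; rewrite mulnSr addnA.
have /step/andP[_ /big_nat_andP gap] := grid (n %/ m).
have := gap (n %% m); rewrite -addnA [m * _]mulnC -divn_eq (Xper _ q) ?Xq.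
- have r_range : 0 < n %% m < m by rewrite ltn_pmod // andbT lt0n.
  by move/(_ r_range).
- by rewrite modnDr.
Qed.

(* Every residue mod [n] is [p + c] with [c < n], and either [c] or [c + n]
   is an admissible offset of [zero_offgrid m Y n p]. *)
Lemma zero_offgrid_eq0 Y p : periodic n Y -> zero_offgrid m Y n p -> forall q, Y q = false.
Proof.
move=> Yper /big_nat_and_condP Y0 q.
have n2 : 2 * n <= m * n by rewrite leq_mul2r m_gt1 orbT.
set c := (q + n * p - p) %% n.
have c_lt : c < n by rewrite ltn_mod.
have pc : p + c = q %[mod n].
  rewrite modnDmr; have -> : p + (q + n * p - p) = p * n + q by nia.
  exact: modnMDl.
have [/andP[c_gt0 m_ndvd_c] | c_grid] := boolP ((0 < c) && ~~ (m %| c)).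
  by rewrite -(Yper _ _ pc); apply/negbTE/Y0 => //; lia.
have m_dvd_c : m %| c.
  by move: c_grid; rewrite negb_and negbK lt0n negbK => /orP[/eqP ->|].
have pcn : p + (c + n) = q %[mod n] by rewrite addnA modnDr.
rewrite -(Yper _ _ pcn); apply/negbTE/Y0; first lia.
by rewrite dvdn_addr.
Qed.

Lemma chi_seq_inv X Y p : periodic n X -> periodic n Y -> Y =1 chi_seq m X ->
  theta_seq_sum m Y (n %/ m).+1 p = X p.
Proof.
move=> Xper Yper YE.
rewrite -(theta_seq_sum_extend p Yper (ltn_Pdiv m_gt1 n_gt0)).
rewrite [RHS](chi_seq_unfold YE n p).
have [/(zero_offgrid_eq0 Yper) Y0 | _] := boolP (zero_offgrid m Y n p); last by rewrite addbF.
have X0 := chi_seq_eq0 Xper (fun q => etrans (esym (YE q)) (Y0 q)).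
by rewrite X0 andbF addbF.
Qed.

End Periodic.

Section Anf.
Variable n : nat.

Lemma anf_coef_sum N (f : vec n -> bool) (F : 'I_N -> vec n -> bool) S :
  (forall x, f x = \big[addb/false]_(k < N) F k x) ->
  anf_coef f S = \big[addb/false]_(k < N) anf_coef (F k) S.
Proof. by move=> fE; rewrite /anf_coef; under eq_bigr do rewrite fE; apply: exchange_big. Qed.

(* Pair each [T] with [i |: T] for some [i] in [S] outside [D]: both give the
   same value of [f], so the Moebius sum cancels. *)
Lemma anf_coef_notsub (f : vec n -> bool) (D S : {set 'I_n}) :
  (forall x y : vec n, {in D, x =1 y} -> f x = f y) ->
  ~~ (S \subset D) -> anf_coef f S = false.
Proof.
move=> f_dep /subsetPn [i iS iD].
rewrite /anf_coef (bigID (fun T : {set 'I_n} => i \in T)) /=.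
suff -> : \big[addb/false]_(T : {set 'I_n} | (T \subset S) && (i \in T)) f (indic T)
        = \big[addb/false]_(T : {set 'I_n} | (T \subset S) && (i \notin T)) f (indic T).
  exact: addbb.
rewrite (reindex_onto (fun T : {set 'I_n} => i |: T) (fun T => T :\ i)) /=; last first.
  by move=> T /andP[_ iT]; rewrite setD1K.
apply: eq_big => T.
  rewrite setU11 andbT subUset sub1set iS /=.
  have [iT | iT] := boolP (i \in T); last by rewrite setU1K // eqxx andbT.
  by rewrite andbF; apply/negbTE/negP => /andP[_ /eqP e]; rewrite -e setD11 in iT.
move=> _; apply: f_dep => j jD; rewrite !ffunE in_setU1.
by have /negbTE -> : j != i by apply: contraNneq iD => <-.
Qed.

Lemma anf_coef_indicator (f : vec n -> bool) (S T0 : {set 'I_n}) :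
  T0 \subset S -> (forall T : {set 'I_n}, T \subset S -> f (indic T) = (T == T0)) ->
  anf_coef f S.
Proof.
move=> T0S fE; rewrite /anf_coef (bigD1 T0) //= fE // eqxx big1 //.
by move=> T /andP[TS /negbTE T_neq]; rewrite fE.
Qed.

End Anf.

Section Offgrid.
Variable m : nat.

Definition offgrid k (p : 'I_k * 'I_m.-1) : nat := p.1 * m + p.2.+1.

Lemma offgrid_div k (p : 'I_k * 'I_m.-1) : offgrid p %/ m = p.1.
Proof.
have := ltn_ord p.2 => u_lt.
by rewrite divnMDl ?divn_small ?addn0 //; lia.
Qed.

Lemma offgrid_mod k (p : 'I_k * 'I_m.-1) : offgrid p %% m = p.2.+1.
Proof. by rewrite modnMDl modn_small //; have := ltn_ord p.2; lia. Qed.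

Lemma offgrid_ndvd k (p : 'I_k * 'I_m.-1) : ~~ (m %| offgrid p).
Proof. by rewrite /dvdn offgrid_mod. Qed.

Lemma offgrid_range k (p : 'I_k * 'I_m.-1) : 0 < offgrid p < m * k.
Proof.
have : p.1.+1 * m <= k * m by rewrite leq_mul2r ltn_ord orbT.
by have := ltn_ord p.2; rewrite mulSn [m * k]mulnC /offgrid; lia.
Qed.

Lemma offgrid_inj k : injective (@offgrid k).
Proof.
move=> [t u] [t' u'] e.
have div_eq := congr1 (divn^~ m) e; have mod_eq := congr1 (modn^~ m) e.
rewrite !offgrid_div !offgrid_mod in div_eq mod_eq.
by move: div_eq mod_eq => /= /val_inj -> [/val_inj ->].
Qed.

Lemma offgrid_surj k j : 0 < j < m * k -> ~~ (m %| j) ->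
  exists p : 'I_k * 'I_m.-1, offgrid p = j.
Proof.
move=> j_range m_ndvd_j; have j_mod_gt0 : 0 < j %% m by rewrite lt0n.
have m_gt0 : 0 < m.
  by rewrite lt0n; apply: contraTneq j_range => ->; rewrite mul0n ltn0 andbF.
have t_lt : j %/ m < k by rewrite ltn_divLR // mulnC; lia.
have u_lt : (j %% m).-1 < m.-1 by have := ltn_pmod j m_gt0; lia.
by exists (Ordinal t_lt, Ordinal u_lt); rewrite /offgrid /= prednK // -divn_eq.
Qed.

End Offgrid.

Section Vectors.
Variable n : nat.
Hypothesis n_gt0 : 0 < n.

Definition ord_mod (k : nat) : 'I_n := Ordinal (ltn_pmod k n_gt0).

Lemma at_ord_mod (x : vec n) k : at_ x k = x (ord_mod k).
Proof.
rewrite /at_; case: insubP => [u _ uE | ]; last by rewrite ltn_pmod.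
by congr (x _); apply: val_inj.
Qed.

Lemma at_ord (x : vec n) (i : 'I_n) : at_ x i = x i.
Proof. by rewrite at_ord_mod; congr (x _); apply: val_inj; rewrite /= modn_small. Qed.

Lemma at_periodic (x : vec n) : periodic n (at_ x).
Proof. by move=> a b; rewrite /at_ => ->. Qed.

Lemma at_chi m (x : vec n) : at_ (chi m x) =1 chi_seq m (at_ x).
Proof.
move=> q; rewrite at_ord_mod ffunE /chi_seq /zero_run /=.
have at_modDr j : at_ x (q %% n + j) = at_ x (q + j) by apply: at_periodic; rewrite modnDml.
rewrite (at_periodic x (modn_mod q n)) at_modDr.
by congr (_ (+) (_ && _)); apply: eq_big_nat => j _; rewrite at_modDr.
Qed.

Lemma theta_seqE m k (x : vec n) (i : 'I_n) : theta m k x i = theta_seq m (at_ x) k i.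
Proof. by rewrite /theta; case: eqP => [-> | _]; rewrite ?theta_seq0 ?at_ord ?ffunE. Qed.

Lemma theta_sum_seqE m l (x : vec n) (i : 'I_n) :
  theta_sum m l x i = theta_seq_sum m (at_ x) l.+1 i.
Proof. by rewrite ffunE; apply: eq_bigr => k _; rewrite theta_seqE. Qed.

Section Chi.
Variable m : nat.
Hypothesis m_gt1 : 1 < m.

Lemma chiK : ~~ (m %| n) -> cancel (@chi n m) (@theta_sum n m (n %/ m)).
Proof.
move=> m_ndvd_n x; apply/ffunP => i; rewrite theta_sum_seqE -at_ord.
by apply: chi_seq_inv => //; [apply: at_periodic | apply: at_periodic | apply: at_chi].
Qed.

Lemma bijective_chiP : bijective (@chi n m) <-> ~~ (m %| n).
Proof.
split=> [/bij_inj chi_inj | m_ndvd_n]; last exact: injF_bij (can_inj (chiK m_ndvd_n)).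
apply/negP => m_dvd_n.
pose grid : vec n := [ffun i : 'I_n => m %| i].
have at_grid : at_ grid =1 dvdn m.
  by move=> k; rewrite at_ord_mod ffunE /= [in RHS](divn_eq k n) dvdn_addr // dvdn_mull.
have : grid = [ffun => false].
  apply: chi_inj; apply/ffunP => i; rewrite -!at_ord !at_chi.
  by rewrite chi_seq_dvdn ?(ltnW m_gt1) // /chi_seq !at_ord_mod !ffunE.
by move/ffunP/(_ (ord_mod 0)); rewrite !ffunE /= mod0n dvdn0.
Qed.

End Chi.

Section Degree.
Variable m : nat.
Hypothesis m_gt1 : 1 < m.

Definition theta_support k (i : nat) : {set 'I_n} :=
  ord_mod (i + m * k) |: [set ord_mod (i + offgrid p) | p : 'I_k * 'I_m.-1].

Lemma card_theta_support_le k i : #|theta_support k i| <= (m - 1) * k + 1.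
Proof.
rewrite cardsU1 addnC leq_add ?leq_b1 //.
by apply: leq_trans (leq_imset_card _ _) _; rewrite card_prod !card_ord mulnC subn1.
Qed.

Lemma ord_mod_addl_inj i : {in gtn n &, injective (fun j => ord_mod (i + j))}.
Proof.
move=> j j' j_lt j'_lt /(congr1 val) /= /eqP.
by rewrite eqn_modDl !modn_small // => /eqP.
Qed.

Lemma card_theta_support k i : m * k < n -> #|theta_support k i| = (m - 1) * k + 1.
Proof.
move=> mk_lt; have offgrid_lt (p : 'I_k * 'I_m.-1) : offgrid p < n.
  by have := offgrid_range p; lia.
have lead_notin :
    ord_mod (i + m * k) \notin [set ord_mod (i + offgrid p) | p : 'I_k * 'I_m.-1].
  apply/imsetP => -[p _ /(ord_mod_addl_inj mk_lt (offgrid_lt p)) e].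
  by have := offgrid_range p; rewrite -e ltnn andbF.
rewrite cardsU1 lead_notin card_imset.
  by rewrite card_prod !card_ord mulnC subn1 addnC.
move=> p p' /(ord_mod_addl_inj (offgrid_lt p) (offgrid_lt p')).
exact: offgrid_inj.
Qed.

Lemma theta_depends k (i : 'I_n) (x y : vec n) :
  {in theta_support k i, x =1 y} -> theta m k x i = theta m k y i.
Proof.
move=> xy; rewrite !theta_seqE /theta_seq !at_ord_mod xy ?setU11 //; congr andb.
rewrite /zero_offgrid big_nat_cond [RHS]big_nat_cond.
apply: eq_bigr => j /andP[j_range m_ndvd_j].
have [p <-] := offgrid_surj j_range m_ndvd_j.
by rewrite !at_ord_mod xy //; apply/setU1P; right; apply: imset_f.
Qed.

Lemma theta_indic k (i : 'I_n) (T : {set 'I_n}) :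
  m * k < n -> T \subset theta_support k i ->
  theta m k (indic T) i = (T == [set ord_mod (i + m * k)]).
Proof.
move=> mk_lt T_sub; rewrite theta_seqE /theta_seq at_ord_mod ffunE.
apply/andP/eqP => [[lead_in /big_nat_and_condP offgrid_out] | ->].
- apply/setP => b; rewrite in_set1; apply/idP/eqP => [b_in | -> //].
  have := subsetP T_sub b b_in; rewrite in_setU1 => /predU1P[// | /imsetP[p _ b_eq]].
  have := offgrid_out (offgrid p) (offgrid_range p) (offgrid_ndvd p).
  by rewrite at_ord_mod ffunE -b_eq b_in.
- rewrite set11; split => //; apply/big_nat_and_condP => j j_range _.
  have j_lt : j < n by lia.
  rewrite at_ord_mod ffunE in_set1; apply/eqP => /(ord_mod_addl_inj j_lt mk_lt).
  lia.
Qed.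

Lemma anf_coef_theta_small k (i : 'I_n) (S : {set 'I_n}) : (m - 1) * k + 1 < #|S| ->
  anf_coef (fun x => theta m k x i) S = false.
Proof.
move=> S_big; apply: (anf_coef_notsub (D := theta_support k i)); first exact: theta_depends.
by apply/negP => /subset_leq_card S_le; have := card_theta_support_le k i; lia.
Qed.

Lemma anf_coef_theta_support k (i : 'I_n) : m * k < n ->
  anf_coef (fun x => theta m k x i) (theta_support k i).
Proof.
move=> mk_lt; apply: (anf_coef_indicator (T0 := [set ord_mod (i + m * k)])).
  by rewrite sub1set setU11.
by move=> T; apply: theta_indic.
Qed.

Lemma anf_deg_theta_sum l (i : 'I_n) : m * l < n ->
  anf_deg (fun x => theta_sum m l x i) = (m - 1) * l + 1.
Proof.
move=> ml_lt; have coefE S : anf_coef (fun x => theta_sum m l x i) S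
    = \big[addb/false]_(k < l.+1) anf_coef (fun x => theta m k x i) S.
  by apply: anf_coef_sum => x; rewrite ffunE.
apply/eqP; rewrite eqn_leq; apply/andP; split.
- apply/bigmax_leqP => S; apply: contraTT; rewrite -ltnNge coefE => S_big.
  rewrite big1 // => k _; apply: anf_coef_theta_small; apply: leq_ltn_trans S_big.
  by rewrite leq_add2r leq_mul2l -ltnS ltn_ord orbT.
- rewrite -(card_theta_support i ml_lt); apply: leq_bigmax_cond.
  rewrite coefE big_ord_recr /= anf_coef_theta_support // big1 // => k _.
  apply: anf_coef_theta_small; rewrite card_theta_support //.
  by rewrite ltn_add2r ltn_mul2l subn_gt0 m_gt1 ltn_ord.
Qed.

Lemma alg_deg_theta_sum l : m * l < n -> alg_deg (@theta_sum n m l) = (m - 1) * l + 1.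
Proof.
move=> ml_lt; apply/eqP; rewrite eqn_leq; apply/andP; split.
  by apply/bigmax_leqP => i _; rewrite anf_deg_theta_sum.
by rewrite -(anf_deg_theta_sum (ord_mod 0) ml_lt); apply: leq_bigmax.
Qed.

End Degree.
End Vectors.

Lemma ltn_mul_div m n : ~~ (m %| n) -> m * (n %/ m) < n.
Proof. by move=> m_ndvd_n; rewrite {2}(divn_eq n m) mulnC -{1}[_ * _]addn0 ltn_add2l lt0n. Qed.

Theorem corollary2 (n m : nat) (hn : 1 <= n) (hm : 2 <= m) :
  (bijective (@chi n m) <-> ~~ (m %| n)) /\
  (~~ (m %| n) ->
     cancel (@chi n m) (@theta_sum n m (n %/ m)) /\
     cancel (@theta_sum n m (n %/ m)) (@chi n m) /\
     alg_deg (@theta_sum n m (n %/ m)) = (m - 1) * (n %/ m) + 1).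
Proof.
split; first exact: bijective_chiP.
move=> m_ndvd_n; have chi_bij := (bijective_chiP hn hm).2 m_ndvd_n.
have chi_K := chiK hn hm m_ndvd_n.
split; first exact: chi_K.
split; first exact: (bij_can_sym chi_bij _).2 chi_K.
by rewrite alg_deg_theta_sum ?ltn_mul_div.
Qed.
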